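(* Let $K$ be a field, let $A=\{{\bf a}_1,\ldots,{\bf a}_n\}\subset\mathbb{Z}^m$ with $\mathbb{N}A$ pointed, and let $I_A\subset K[x_1,\ldots,x_n]$ be its toric ideal. Then $I_A$ is radical splittable if and only if there exist a set $C\subset\ker_{\mathbb{Z}}(A)$ such that $\{B({\bf u})\mid{\bf u}\in C\}$ is a minimal system of binomial generators of $I_A$ up to radical, and sets $C_1,C_2$ with $C=C_1\cup C_2$, $\mathrm{span}_{\mathbb{Q}}(C_1)\subsetneqq\ker_{\mathbb{Q}}(A)$ and $\mathrm{span}_{\mathbb{Q}}(C_2)\subsetneqq\ker_{\mathbb{Q}}(A)$.
   Context: $\ker_{\mathbb{Q}}(A)=\{{\bf u}\in\mathbb{Q}^n\mid \sum u_i{\bf a}_i={\bf 0}\}$, $\ker_{\mathbb{Z}}(A)=\ker_{\mathbb{Q}}(A)\cap\mathbb{Z}^n$; $\mathbb{N}A$ pointed means $\ker_{\mathbb{Z}}(A)\cap\mathbb{N}^n=\{{\bf 0}\}$. The toric ideal $I_A$ is the kernel of $K[x_1,\ldots,x_n]\to K[t_1^{\pm1},\ldots,t_m^{\pm1}]$, $x_i\mapsto{\bf t}^{{\bf a}_i}$; for ${\bf u}\in\ker_{\mathbb{Z}}(A)$, $B({\bf u})={\bf x}^{{\bf u}^+}-{\bf x}^{{\bf u}^-}$ with ${\bf u}^\pm\in\mathbb{N}^n$ the positive/negative parts of ${\bf u}$. $I_A$ is radical splittable if there exist toric ideals $I_{A_1},I_{A_2}\subset K[x_1,\ldots,x_n]$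 (each $A_i$ a configuration of $n$ integer vectors with $\mathbb{N}A_i$ pointed) with $I_A=\mathrm{rad}(I_{A_1}+I_{A_2})$ and $I_{A_i}\ne I_A$ for $i=1,2$. A minimal system of binomial generators of $I_A$ up to radical is a set $S$ of binomials with $\mathrm{rad}(S)=I_A$ such that no proper subset of $S$ has radical equal to $I_A$. $\mathrm{span}_{\mathbb{Q}}(C)$ denotes the $\mathbb{Q}$-linear span. *)

From HB Require Import structures.
From mathcomp Require Import all_boot all_order all_algebra.
From mathcomp Require Import mpoly.
Set Implicit Arguments. Unset Strict Implicit. Unset Printing Implicit Defensive.
Import Order.TTheory GRing.Theory Num.Theory.
Local Open Scope ring_scope.

(* A configuration A = {a_1,...,a_n} in Z^m is an m x n integer matrix whose
   i-th column is a_i.  Integer vectors of Z^n are column vectors 'cV[int]_n. *)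

Definition mexp (n : nat) (b : 'X_{1..n}) : 'cV[int]_n := \col_i (b i)%:Z.

Definition kerZ (m n : nat) (A : 'M[int]_(m, n)) (u : 'cV[int]_n) : Prop :=
  A *m u = 0.

Definition kerQ (m n : nat) (A : 'M[int]_(m, n)) (v : 'cV[rat]_n) : Prop :=
  map_mx intr A *m v = 0.

(* NA pointed: ker_Z(A) cap N^n = {0} *)
Definition pointed (m n : nat) (A : 'M[int]_(m, n)) : Prop :=
  forall u : 'cV[int]_n, kerZ A u -> (forall i, 0 <= u i 0) -> u = 0.

(* Toric ideal I_A: kernel of x_i |-> t^{a_i} into K[t^{+-1}] (the group
   algebra of Z^m).  The image of f = sum_b f_b x^b is sum_b f_b t^{A b};
   f is in the kernel iff the coefficient of every Laurent monomial t^w of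
   the image vanishes. *)
Definition toric_ideal (K : fieldType) (m n : nat) (A : 'M[int]_(m, n))
  (f : {mpoly K[n]}) : Prop :=
  forall w : 'cV[int]_m, \sum_(b <- msupp f | A *m mexp b == w) f@_b = 0.

Arguments toric_ideal K {m n} A f.

Definition posm (n : nat) (u : 'cV[int]_n) : 'X_{1..n} :=
  [multinom absz (Num.max (u i ord0) 0%R) | i < n].
Definition negm (n : nat) (u : 'cV[int]_n) : 'X_{1..n} :=
  [multinom absz (Num.max (- u i ord0)%R 0%R) | i < n].

Definition binom (K : fieldType) (n : nat) (u : 'cV[int]_n) : {mpoly K[n]} :=
  'X_[posm u] - 'X_[negm u].

Arguments binom K {n} u.

Definition ideal_gen (K : fieldType) (n : nat) (S : {mpoly K[n]} -> Prop)
  (f : {mpoly K[n]}) : Prop :=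
  exists r : seq ({mpoly K[n]} * {mpoly K[n]}),
    (forall p, p \in r -> S p.2) /\ f = \sum_(p <- r) p.1 * p.2.

Definition rad (K : fieldType) (n : nat) (S : {mpoly K[n]} -> Prop)
  (f : {mpoly K[n]}) : Prop :=
  exists k : nat, ideal_gen S (f ^+ k).

Definition set_eq (T : Type) (P Q : T -> Prop) : Prop := forall x, P x <-> Q x.

Definition radical_splittable (K : fieldType) (m n : nat)
  (A : 'M[int]_(m, n)) : Prop :=
  exists (m1 m2 : nat) (A1 : 'M[int]_(m1, n)) (A2 : 'M[int]_(m2, n)),
    [/\ pointed A1, pointed A2,
        set_eq (toric_ideal K A)
               (rad (fun f => toric_ideal K A1 f \/ toric_ideal K A2 f)),
        ~ set_eq (toric_ideal K A1) (toric_ideal K A)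
      & ~ set_eq (toric_ideal K A2) (toric_ideal K A)].

Definition is_binomial (K : fieldType) (n : nat) (f : {mpoly K[n]}) : Prop :=
  exists (a b : 'X_{1..n}), f = 'X_[a] - 'X_[b].

Arguments radical_splittable K {m n} A.

Definition min_binom_gen_up_to_rad (K : fieldType) (m n : nat)
  (A : 'M[int]_(m, n)) (S : {mpoly K[n]} -> Prop) : Prop :=
  [/\ forall f, S f -> is_binomial f,
      set_eq (rad S) (toric_ideal K A)
    & forall S' : {mpoly K[n]} -> Prop, (forall f, S' f -> S f) ->
        ~ (exists f, S f /\ ~ S' f) \/ ~ set_eq (rad S') (toric_ideal K A)].

Definition spanQ (n : nat) (C : 'cV[int]_n -> Prop) (v : 'cV[rat]_n) : Prop :=
  exists r : seq (rat * 'cV[int]_n),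
    (forall p, p \in r -> C p.2) /\ v = \sum_(p <- r) p.1 *: map_mx intr p.2.

Definition span_proper_in_kerQ (m n : nat) (A : 'M[int]_(m, n))
  (C : 'cV[int]_n -> Prop) : Prop :=
  (forall v, spanQ C v -> kerQ A v) /\ (exists v, kerQ A v /\ ~ spanQ C v).

(* The toric ideal I_A is the kernel of the ring map x_i |-> t^(a_i) into the
   fraction field of K[t_1, ..., t_m], so it is prime and contains x^a - x^b
   exactly when A a = A b.  By Dickson's lemma there is a finite G in ker_Z(A)
   such that every nonzero u in ker_Z(A) lies conformally above some g in G;
   subtracting x^(b - g+) B(g) moves x^b - x^b' to a binomial of smaller
   distance, so the B(g) generate I_A, and I_A grows with ker_Z(A).
   If I_A = rad(I_A1 + I_A2), a shortest sublist of such generators of I_A1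
   and I_A2 is a minimal system up to radical, and the part C_i coming from A_i
   spans a proper subspace of ker_Q(A): otherwise ker_Z(A) is inside ker_Z(A_i)
   and I_Ai = I_A.  Conversely, if span_Q(C_i) is proper, an integral normal
   vector z of it that is not orthogonal to ker_Q(A) gives the pointed
   configuration A_i = [A; z^T], with C_i in ker_Z(A_i) and I_Ai <> I_A; then
   I_A = rad(C) lies in rad(I_A1 + I_A2), which lies in the prime I_A. *)

From Pilot Require Import Defs.
From HB Require Import structures.
From mathcomp Require Import all_boot all_order all_algebra.
From mathcomp Require Import mpoly.
From mathcomp Require Import zify ring.
From mathcomp Require Import boolp.
Import Order.TTheory GRing.Theory Num.Theory.
Local Open Scope ring_scope.

Set Implicit Arguments. Unset Strict Implicit. Unset Printing Implicit Defensive.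

(** * Laurent monomials and the toric map *)

Lemma mpolyX_inj (R : ringType) (m : nat) :
  injective (fun a : 'X_{1..m} => 'X_[a] : {mpoly R[m]}).
Proof.
move=> a b /= eX; have := mcoeffX R a a; rewrite eX mcoeffX eqxx.
by case: eqP => // _ /eqP; rewrite eq_sym oner_eq0.
Qed.

Lemma mulmx_mexp (m n : nat) (A : 'M[int]_(m, n)) (b : 'X_{1..n}) :
  A *m mexp b = \sum_(i < n) col i A *+ b i.
Proof.
apply/matrixP => j k; rewrite !mxE summxE; apply: eq_bigr => i _.
by rewrite !mxE ord1 mulmxnE !mxE -mulr_natr natz.
Qed.

Definition mnm_of_col (m : nat) (w : 'cV[int]_m) : 'X_{1..m} :=
  [multinom absz (w j ord0) | j < m].

Definition const_col (m N : nat) : 'cV[int]_m := const_mx N%:Z.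

Definition col_bounded (m N : nat) (w : 'cV[int]_m) : Prop :=
  forall j, `|w j ord0| <= N%:Z.

Lemma col_bounded_seq (m : nat) (s : seq 'cV[int]_m) :
  exists N, forall w, w \in s -> col_bounded N w.
Proof.
exists (\max_(w <- s) \max_j `|w j ord0|)%N => w ws j; rewrite -abszE lez_nat.
have wmax := @leq_bigmax_seq _ s xpredT (fun w : 'cV[int]_m => \max_j `|w j ord0|)%N w ws isT.
by apply: leq_trans wmax; exact: (@leq_bigmax _ (fun j => `|w j ord0|%N)).
Qed.

Definition col_nonneg (m : nat) (w : 'cV[int]_m) : Prop := forall j, 0 <= w j ord0.

Lemma col_bounded_shift (m N : nat) (w : 'cV[int]_m) :
  col_bounded N w -> col_nonneg (w + const_col m N).
Proof. by move=> wN j; have := wN j; rewrite !mxE; move: (w j ord0) => x; lia. Qed.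

Lemma mexpK (m : nat) : cancel (@mexp m) (@mnm_of_col m).
Proof. by move=> e; apply/mnmP => j; rewrite mnmE mxE. Qed.

Lemma mnm_of_colK (m : nat) (w : 'cV[int]_m) : col_nonneg w -> mexp (mnm_of_col w) = w.
Proof.
by move=> w_ge0; apply/matrixP => j k; rewrite fintype.ord1 mxE mnmE gez0_abs.
Qed.

Lemma mnm_of_col_eq (m : nat) (w : 'cV[int]_m) (e : 'X_{1..m}) :
  col_nonneg w -> (mnm_of_col w == e) = (w == mexp e).
Proof. by move=> w_ge0; apply/eqP/eqP => [<-|->]; rewrite ?mnm_of_colK ?mexpK. Qed.

Section LaurentMonomials.
Variables (R : idomainType) (m : nat).
Local Notation F := {fraction {mpoly R[m]}}.

Definition tvar (j : 'I_m) : F := tofrac 'X_j.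

Definition tpow (w : 'cV[int]_m) : F := \prod_(j < m) tvar j ^ w j ord0.

Lemma tvar_neq0 j : tvar j != 0.
Proof.
rewrite tofrac_eq0; apply/eqP => /(congr1 (mcoeff U_(j)%MM)).
by rewrite mcoeffX eqxx mcoeff0 => /eqP; rewrite oner_eq0.
Qed.

Lemma tpow0 : tpow 0 = 1.
Proof. by rewrite /tpow big1 // => j _; rewrite mxE expr0z. Qed.

Lemma tpowD w1 w2 : tpow (w1 + w2) = tpow w1 * tpow w2.
Proof.
by rewrite /tpow -big_split; apply: eq_bigr => j _; rewrite mxE expfzDr // tvar_neq0.
Qed.

Lemma tpow_neq0 w : tpow w != 0.
Proof. by apply/prodf_neq0 => j _; apply/expfz_neq0/tvar_neq0. Qed.

Lemma tpow_sum (I : Type) (r : seq I) (G : I -> 'cV[int]_m) :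
  tpow (\sum_(i <- r) G i) = \prod_(i <- r) tpow (G i).
Proof. exact: (big_morph tpow tpowD tpow0). Qed.

Lemma tpowMn w k : tpow (w *+ k) = tpow w ^+ k.
Proof. by elim: k => [|k IH]; rewrite ?mulr0n ?tpow0 // mulrS tpowD IH exprS. Qed.

Lemma tpow_mnm w : col_nonneg w -> tpow w = tofrac 'X_[mnm_of_col w].
Proof.
move=> w_ge0; rewrite mpolyXE_id rmorph_prod; apply: eq_bigr => j _.
by rewrite rmorphXn mnmE -[w j ord0]gez0_abs ?w_ge0.
Qed.

Lemma tpow_shift N w : col_bounded N w ->
  tpow w * tpow (const_col m N) = tofrac 'X_[mnm_of_col (w + const_col m N)].
Proof. by move=> /col_bounded_shift wN; rewrite -tpowD tpow_mnm. Qed.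

Lemma tpow_inj : injective tpow.
Proof.
move=> w1 w2 ew; have [N bN] := col_bounded_seq [:: w1; w2].
have [b1 b2] : col_bounded N w1 /\ col_bounded N w2.
  by split; apply: bN; rewrite !inE eqxx ?orbT.
have /eqP := congr1 ( *%R^~ (tpow (const_col m N))) ew.
rewrite /= !tpow_shift // tofrac_eq => /eqP /mpolyX_inj /(congr1 (@mexp m)).
have [s1 s2] := (col_bounded_shift b1, col_bounded_shift b2).
by rewrite !mnm_of_colK // => /addIr.
Qed.

End LaurentMonomials.

Section ToricMap.
Variables (K : fieldType) (m n : nat) (A : 'M[int]_(m, n)).
Local Notation F := {fraction {mpoly K[m]}}.
Implicit Types (f : {mpoly K[n]}) (N : nat).

Definition tconst : {rmorphism K -> F} := (@tofrac _) \o (@mpolyC m K).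

Definition toric_map : {mpoly K[n]} -> F := mmap tconst (fun i => tpow K (col i A)).

HB.instance Definition _ := GRing.RMorphism.on toric_map.

Lemma toric_mapX a : toric_map 'X_[a] = tpow K (A *m mexp a).
Proof.
rewrite /toric_map mmapX /mmap1 mulmx_mexp tpow_sum.
by apply: eq_bigr => i _; rewrite tpowMn.
Qed.

Lemma toric_mapE f :
  toric_map f = \sum_(b <- msupp f) tconst f@_b * tpow K (A *m mexp b).
Proof.
rewrite {1}(mpolyE f) raddf_sum; apply: eq_bigr => b _.
by rewrite /= /toric_map mmapZ -/toric_map toric_mapX.
Qed.

Definition toric_shift N f : {mpoly K[m]} :=
  \sum_(b <- msupp f) (f@_b)%:MP * 'X_[mnm_of_col (A *m mexp b + const_col m N)].

Definition supp_bounded N f : Prop :=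
  forall b, b \in msupp f -> col_bounded N (A *m mexp b).

Lemma toric_map_shift N f : supp_bounded N f ->
  toric_map f * tpow K (const_col m N) = tofrac (toric_shift N f).
Proof.
move=> fN; rewrite toric_mapE mulr_suml rmorph_sum /= !big_seq; apply: eq_bigr => b fb.
by rewrite -mulrA (tpow_shift _ (fN b fb)) rmorphM.
Qed.

Lemma mcoeff_toric_shift N f e : supp_bounded N f ->
  (toric_shift N f)@_e = \sum_(b <- msupp f | A *m mexp b == mexp e - const_col m N) f@_b.
Proof.
move=> fN; rewrite raddf_sum [RHS]big_mkcond !big_seq; apply: eq_bigr => b fb /=.
rewrite mcoeffCM mcoeffX mnm_of_col_eq; last exact/col_bounded_shift/fN.
by rewrite eq_sym -subr_eq eq_sym; case: eqP; rewrite ?mulr1 ?mulr0.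
Qed.

Lemma toric_idealP f : toric_ideal K A f <-> toric_map f = 0.
Proof.
have shift0 N : supp_bounded N f -> toric_map f = 0 <-> toric_shift N f = 0.
  move=> fN; split => [f0|s0]; apply/eqP.
    by rewrite -tofrac_eq0 -toric_map_shift // f0 mul0r.
  have /eqP := toric_map_shift fN.
  by rewrite s0 rmorph0 mulf_eq0 (negbTE (tpow_neq0 _ _)) orbF.
split => [fA|f0 w].
  have [N bN] := col_bounded_seq [seq A *m mexp b | b <- msupp f].
  have fN : supp_bounded N f by move=> b fb; apply/bN/map_f.
  apply/(shift0 N fN)/mpolyP => e; rewrite mcoeff0 mcoeff_toric_shift //; exact: fA.
have [N bN] := col_bounded_seq (w :: [seq A *m mexp b | b <- msupp f]).
have fN : supp_bounded N f by move=> b fb; apply/bN/mem_behead/map_f.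
have wN : col_nonneg (w + const_col m N) by apply/col_bounded_shift/bN/mem_head.
have /mpolyP/(_ (mnm_of_col (w + const_col m N))) := proj1 (shift0 N fN) f0.
by rewrite mcoeff0 mcoeff_toric_shift // mnm_of_colK // addrK => ->.
Qed.

End ToricMap.

Lemma mexp_posm_negm (n : nat) (u : 'cV[int]_n) : mexp (posm u) - mexp (negm u) = u.
Proof.
apply/matrixP => i j; rewrite !mxE !mnmE fintype.ord1.
by move: (u i ord0) => x; lia.
Qed.

(** * Binomial generators of toric ideals *)

Definition binomials (K : fieldType) (n : nat) (C : 'cV[int]_n -> Prop)
  (f : {mpoly K[n]}) : Prop :=
  exists u, C u /\ f = binom K u.

Arguments binomials K {n} C f.

Section IdealGen.
Variables (K : fieldType) (n : nat).
Implicit Types (S T : {mpoly K[n]} -> Prop) (f g : {mpoly K[n]}).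

Lemma ideal_gen_mem S f : S f -> ideal_gen S f.
Proof.
by move=> Sf; exists [:: (1, f)]; rewrite big_seq1 mul1r; split=> // p /[!inE] /eqP ->.
Qed.

Lemma ideal_gen0 S : ideal_gen S 0.
Proof. by exists [::]; rewrite big_nil. Qed.

Lemma ideal_genD S f g : ideal_gen S f -> ideal_gen S g -> ideal_gen S (f + g).
Proof.
move=> [r1 [r1S ->]] [r2 [r2S ->]]; exists (r1 ++ r2); rewrite big_cat.
by split=> // p /[!mem_cat] /orP [/r1S|/r2S].
Qed.

Lemma ideal_genMl S q f : ideal_gen S f -> ideal_gen S (q * f).
Proof.
move=> [r [rS ->]]; exists [seq (q * p.1, p.2) | p <- r]; split.
  by move=> ? /mapP [p pr ->]; exact: (rS p pr).
by rewrite big_map mulr_sumr; apply: eq_bigr => p _; rewrite mulrA.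
Qed.

Lemma ideal_gen_sum S (I : eqType) (r : seq I) (F : I -> {mpoly K[n]}) :
  (forall i, i \in r -> ideal_gen S (F i)) -> ideal_gen S (\sum_(i <- r) F i).
Proof.
elim: r => [|i r IH] rS; first by rewrite big_nil; apply: ideal_gen0.
rewrite big_cons; apply: ideal_genD; first by apply: rS; rewrite mem_head.
by apply: IH => j jr; apply/rS/mem_behead.
Qed.

Lemma ideal_gen_sub S T f :
  (forall p, S p -> ideal_gen T p) -> ideal_gen S f -> ideal_gen T f.
Proof. by move=> ST [r [rS ->]]; apply: ideal_gen_sum => p pr; apply/ideal_genMl/ST/rS. Qed.

Lemma rad_sub S T f : (forall p, S p -> ideal_gen T p) -> Defs.rad S f -> Defs.rad T f.
Proof. by move=> ST [k Sfk]; exists k; apply: ideal_gen_sub Sfk. Qed.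

End IdealGen.

Section ToricIdeal.
Variables (K : fieldType) (m n : nat) (A : 'M[int]_(m, n)).
Local Notation toric := (toric_ideal K A).
Implicit Types (S : {mpoly K[n]} -> Prop) (f : {mpoly K[n]}).

Lemma toric_ideal_gen S f : (forall p, S p -> toric p) -> ideal_gen S f -> toric f.
Proof.
move=> StA [r [rS ->]]; apply/toric_idealP; rewrite rmorph_sum big_seq big1 // => p pr.
by have /toric_idealP p0 := StA _ (rS p pr); rewrite rmorphM /= p0 mulr0.
Qed.

Lemma toric_ideal_rad S f : (forall p, S p -> toric p) -> Defs.rad S f -> toric f.
Proof.
move=> StA [k /(toric_ideal_gen StA)/toric_idealP]; rewrite rmorphXn => /eqP.
by rewrite expf_eq0 => /andP [_ /eqP /toric_idealP].
Qed.

Lemma toric_ideal_monomial_diff a b :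
  toric ('X_[a] - 'X_[b]) <-> A *m mexp a = A *m mexp b.
Proof.
rewrite toric_idealP rmorphB /= !toric_mapX; split => [/eqP|->]; last exact: subrr.
by rewrite subr_eq0 => /eqP /tpow_inj.
Qed.

Lemma toric_ideal_binom u : toric (binom K u) <-> kerZ A u.
Proof.
rewrite toric_ideal_monomial_diff /kerZ -{3}(mexp_posm_negm u) mulmxBr.
by split=> [->|/eqP]; rewrite ?subrr // subr_eq0 => /eqP.
Qed.

Definition fiber_binomial f : Prop :=
  exists a b, A *m mexp a = A *m mexp b /\ f = 'X_[a] - 'X_[b].

Lemma toric_ideal_fiber_gen f : toric f -> ideal_gen fiber_binomial f.
Proof.
move=> fA; set s := msupp f.
(* With [r b] a representative of the fiber of [b], the sum of the
   [f@_b x^(r b)] vanishes fiber by fiber. *)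
pose same_fiber b b' := A *m mexp b' == A *m mexp b.
pose r b := nth 0%MM s (find (same_fiber b) s).
have r_fiber b : b \in s -> A *m mexp (r b) = A *m mexp b.
  move=> bs; apply/eqP; apply: (@nth_find _ 0%MM (same_fiber b)).
  by apply/hasP; exists b; rewrite // /same_fiber.
have r_eq b b0 : b \in s -> b0 \in s -> (r b == r b0) = (A *m mexp b == A *m mexp b0).
  move=> bs b0s; apply/eqP/eqP => [rb|Eb]; last by rewrite /r /same_fiber Eb.
  by rewrite -r_fiber // rb r_fiber.
have sum_r : \sum_(b <- s) (f@_b)%:MP * 'X_[r b] = 0.
  apply/mpolyP => e; rewrite mcoeff0 raddf_sum /=.
  have [/hasP [b0 b0s /eqP <-]|none] := boolP (has (fun b => r b == e) s).
    rewrite -[RHS](fA (A *m mexp b0)) [RHS]big_mkcond !big_seq.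
    apply: eq_bigr => b bs; rewrite mcoeffCM mcoeffX r_eq //.
    by case: eqP; rewrite ?mulr1 ?mulr0.
  rewrite big_seq big1 // => b bs; rewrite mcoeffCM mcoeffX.
  by case: eqP => [rb|]; [case/hasP: none; exists b; rewrite ?rb|rewrite mulr0].
have -> : f = \sum_(b <- s) (f@_b)%:MP * ('X_[b] - 'X_[r b]).
  rewrite (eq_bigr _ (fun b _ => mulrBr _ _ _)) sumrB sum_r subr0 {1}(mpolyE f).
  by apply: eq_bigr => b _; rewrite mul_mpolyC.
apply: ideal_gen_sum => b bs; apply/ideal_genMl/ideal_gen_mem.
by exists b, (r b); rewrite r_fiber.
Qed.

End ToricIdeal.

(** * Dickson's lemma and finite generation *)

Definition mnm_basis (T : eqType) (k : nat) (phi : T -> 'X_{1..k}) (P : T -> Prop)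
  (s : seq T) : Prop :=
  (forall y, y \in s -> P y) /\ (forall x, P x -> exists2 y, y \in s & (phi y <= phi x)%MM).

Lemma mnm_basis_image (k : nat) (T : eqType) (phi : T -> 'X_{1..k}) (P : T -> Prop) :
  (forall Q : 'X_{1..k} -> Prop, exists s, mnm_basis id Q s) ->
  exists s, mnm_basis phi P s.
Proof.
move=> basisk; have [[x0 Px0]|noP] := pselect (exists x, P x); last first.
  by exists [::]; split=> // x Px; case: noP; exists x.
pose Q t := exists2 x, P x & phi x = t.
(* [x0] is the value of [pick] outside the image of [P]. *)
have [pick pickP] : {pick : 'X_{1..k} -> T & forall t, Q t -> P (pick t) /\ phi (pick t) = t}.
  apply: (@choice _ _ (fun t x => Q t -> P x /\ phi x = t)) => t.
  by have [[x Px <-]|nQ] := pselect (Q t); [exists x|exists x0].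
have [s [sQ sdom]] := basisk Q.
exists (map pick s); split=> [? /mapP [t ts ->]|x Px]; first by case: (pickP t (sQ t ts)).
have [t ts tx] := sdom (phi x) (ex_intro2 _ _ x Px erefl).
by exists (pick t); [exact: map_f|case: (pickP t (sQ t ts)) => _ ->].
Qed.

Definition mnm_tail (k : nat) (x : 'X_{1..k.+1}) : 'X_{1..k} :=
  [multinom x (lift ord0 j) | j < k].

Lemma lepm_head_tail (k : nat) (x y : 'X_{1..k.+1}) :
  (x ord0 <= y ord0)%N -> (mnm_tail x <= mnm_tail y)%MM -> (x <= y)%MM.
Proof.
move=> le0 /mnm_lepP le_tl; apply/mnm_lepP => i.
by case: (unliftP ord0 i) => [j ->|->] //; have := le_tl j; rewrite !mnmE.
Qed.

Theorem dickson (k : nat) (P : 'X_{1..k} -> Prop) : exists s, mnm_basis id P s.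
Proof.
elim: k P => [|k IH] P.
  have [[x Px]|noP] := pselect (exists x, P x); last first.
    by exists [::]; split=> // x Px; case: noP; exists x.
  exists [:: x]; split=> [y /[!inE] /eqP -> //|y _].
  by exists x; rewrite ?mem_head //; apply/mnm_lepP => -[].
(* A basis of the tails covers the [x] with [X <= x ord0]; each of the finitely
   many slices [x ord0 = c < X] has a basis of its own. *)
have [W [WP Wdom]] := mnm_basis_image (@mnm_tail k) P IH.
pose X := (\max_(y <- W) y ord0)%N.
have [Wc Wc_basis] : {Wc : nat -> seq 'X_{1..k.+1} &
    forall c, mnm_basis (@mnm_tail k) (fun x => P x /\ x ord0 = c) (Wc c)}.
  apply: (@choice _ _ (fun c => mnm_basis (@mnm_tail k) (fun x => P x /\ x ord0 = c))).
  by move=> c; apply: mnm_basis_image.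
exists (W ++ flatten [seq Wc c | c <- iota 0 X]); split=> [y|x Px].
  by rewrite mem_cat => /orP [/WP|/flatten_mapP [c _ /(Wc_basis c).1 []]].
have [Xx|xX] := leqP X (x ord0).
  have [y yW tl_yx] := Wdom x Px; exists y; first by rewrite mem_cat yW.
  apply: lepm_head_tail tl_yx; apply: leq_trans Xx.
  exact: (@leq_bigmax_seq _ W xpredT (fun y => y ord0) y yW isT).
have [y yWc tl_yx] := (Wc_basis (x ord0)).2 x (conj Px erefl).
exists y.
  by rewrite mem_cat; apply/orP; right; apply/flatten_mapP; exists (x ord0); rewrite ?mem_iota.
have [_ y0] := (Wc_basis (x ord0)).1 y yWc.
by apply: lepm_head_tail tl_yx; rewrite y0.
Qed.

Definition conformal (n : nat) (g u : 'cV[int]_n) : bool :=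
  (posm g <= posm u)%MM && (negm g <= negm u)%MM.

Definition posneg_mnm (n : nat) (u : 'cV[int]_n) : 'X_{1..n + n} :=
  [multinom match split i with inl j => posm u j | inr j => negm u j end | i < n + n].

Lemma lepm_posneg (n : nat) (g u : 'cV[int]_n) :
  (posneg_mnm g <= posneg_mnm u)%MM -> conformal g u.
Proof.
move=> /mnm_lepP le_gu; apply/andP; split; apply/mnm_lepP => j.
  by have := le_gu (unsplit (inl j)); rewrite !mnmE unsplitK !mnmE.
by have := le_gu (unsplit (inr j)); rewrite !mnmE unsplitK !mnmE.
Qed.

Lemma conformal_basis (m n : nat) (A : 'M[int]_(m, n)) : exists G : seq 'cV[int]_n,
  (forall g, g \in G -> kerZ A g /\ g != 0) /\
  (forall u, kerZ A u -> u != 0 -> exists2 g, g \in G & conformal g u).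
Proof.
have [G [GA Gdom]] :=
  mnm_basis_image (@posneg_mnm n) (fun u => kerZ A u /\ u != 0) (@dickson _).
exists G; split=> // u uA u0; have [g gG] := Gdom u (conj uA u0).
by exists g => //; apply: lepm_posneg.
Qed.

Definition mdist (n : nat) (b b' : 'X_{1..n}) : nat :=
  (\sum_(j < n) `|(b j)%:Z - (b' j)%:Z|)%N.

Lemma conformal_reduction (n : nat) (b b' : 'X_{1..n}) (g : 'cV[int]_n) :
  conformal g (mexp b - mexp b') -> g != 0 ->
  [/\ (posm g <= b)%MM, mexp (b - posm g + negm g)%MM = mexp b - g
    & (mdist (b - posm g + negm g)%MM b' < mdist b b')%N].
Proof.
move=> /andP [/mnm_lepP gp /mnm_lepP gn] g0.
have dist : (mdist (b - posm g + negm g)%MM b' + \sum_j `|g j ord0|%N = mdist b b')%N.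
  rewrite /mdist -big_split; apply: eq_bigr => j _ /=.
  by have := gp j; have := gn j; rewrite !mnmE !mxE; move: (g j ord0) => x; lia.
split.
- by apply/mnm_lepP => j; have := gp j; rewrite !mnmE !mxE; lia.
- apply/matrixP => j k; rewrite fintype.ord1 !mxE !mnmE.
  by have := gp j; have := gn j; rewrite !mnmE !mxE; move: (g j ord0) => x; lia.
have /cV0Pn [j gj] := g0; rewrite -dist -addn1 leq_add2l (bigD1 j) //=.
by rewrite (leq_trans _ (leq_addr _ _)) // absz_gt0.
Qed.

Section BinomialGen.
Variables (K : fieldType) (m n : nat) (A : 'M[int]_(m, n)) (G : seq 'cV[int]_n).
Hypothesis G_ker : forall g, g \in G -> kerZ A g /\ g != 0.
Hypothesis G_conformal : forall u, kerZ A u -> u != 0 -> exists2 g, g \in G & conformal g u.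
Local Notation BG := (binomials K (fun u => u \in G)).

Lemma fiber_binomial_gen (b b' : 'X_{1..n}) :
  A *m mexp b = A *m mexp b' -> ideal_gen BG ('X_[b] - 'X_[b']).
Proof.
have [d] := ubnP (mdist b b'); elim: d b => // d IH b lt_d Ab.
have [->|neq] := eqVneq b b'; first by rewrite subrr; apply: ideal_gen0.
have u_ker : kerZ A (mexp b - mexp b') by rewrite /kerZ mulmxBr Ab subrr.
have u0 : mexp b - mexp b' != 0 by rewrite subr_eq0 (can_eq (@mexpK n)).
have [g gG gu] := G_conformal u_ker u0; have [gA g0] := G_ker gG.
have [gb cE lt_dist] := conformal_reduction gu g0.
set c := (b - posm g + negm g)%MM in cE lt_dist.
have -> : 'X_[b] - 'X_[b'] = 'X_[b - posm g] * binom K g + ('X_[c] - 'X_[b']).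
  by rewrite /binom mulrBr -!mpolyXD submK // addrA subrK.
apply: ideal_genD; first by apply/ideal_genMl/ideal_gen_mem; exists g.
apply: IH; first exact: leq_trans lt_dist lt_d.
by rewrite cE mulmxBr gA subr0.
Qed.

Lemma conformal_binomial_gen f : toric_ideal K A f -> ideal_gen BG f.
Proof.
move=> /toric_ideal_fiber_gen; apply: ideal_gen_sub => _ [a [b [Aab ->]]].
exact: fiber_binomial_gen.
Qed.

End BinomialGen.

Theorem toric_ideal_finite_gen (K : fieldType) (m n : nat) (A : 'M[int]_(m, n)) :
  exists G : seq 'cV[int]_n, (forall g, g \in G -> kerZ A g) /\
    (forall f, toric_ideal K A f -> ideal_gen (binomials K (fun u => u \in G)) f).
Proof.
have [G [G_ker G_conformal]] := conformal_basis A.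
by exists G; split=> [g /G_ker []|]; last exact: conformal_binomial_gen.
Qed.

Lemma toric_ideal_sub (K : fieldType) (m1 m2 n : nat)
    (A1 : 'M[int]_(m1, n)) (A2 : 'M[int]_(m2, n)) :
  (forall u, kerZ A1 u -> kerZ A2 u) -> forall f, toric_ideal K A1 f -> toric_ideal K A2 f.
Proof.
move=> ker12 f; have [G [G_ker Ggen]] := toric_ideal_finite_gen K A1.
move=> /Ggen; apply: toric_ideal_gen => _ [u [uG ->]].
exact/toric_ideal_binom/ker12/G_ker.
Qed.

(** * Rational kernels and spans *)

Lemma map_intr_eq0 (p q : nat) (X : 'M[int]_(p, q)) :
  map_mx intr X = 0 :> 'M[rat]_(p, q) -> X = 0.
Proof.
move=> /matrixP X0; apply/matrixP => i j.
by have /eqP := X0 i j; rewrite !mxE intr_eq0 => /eqP.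
Qed.

Lemma kerQ_intr (m n : nat) (A : 'M[int]_(m, n)) (u : 'cV[int]_n) :
  kerQ A (map_mx intr u) <-> kerZ A u.
Proof. by rewrite /kerQ /kerZ -map_mxM; split=> [/map_intr_eq0|->] //; apply: map_mx0. Qed.

Lemma spanQ_mem (n : nat) (C : 'cV[int]_n -> Prop) c : C c -> spanQ C (map_mx intr c).
Proof.
by move=> Cc; exists [:: (1, c)]; rewrite big_seq1 scale1r; split=> // p /[!inE] /eqP ->.
Qed.

Lemma spanQ_kerQ (m n : nat) (A : 'M[int]_(m, n)) (C : 'cV[int]_n -> Prop) v :
  (forall u, C u -> kerZ A u) -> spanQ C v -> kerQ A v.
Proof.
move=> CA [r [rC ->]]; rewrite /kerQ mulmx_sumr big_seq big1 // => p pr.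
by rewrite -scalemxAr (kerQ_intr A p.2).2 ?scaler0 //; apply/CA/rC.
Qed.

Definition rat_rows (n r : nat) (cs : 'I_r -> 'cV[int]_n) : 'M[rat]_(r, n) :=
  \matrix_(i, j) (cs i j ord0)%:~R.

Lemma row_rat_rows (n r : nat) (cs : 'I_r -> 'cV[int]_n) i :
  row i (rat_rows cs) = (map_mx intr (cs i))^T.
Proof. by apply/matrixP => a b; rewrite !mxE fintype.ord1. Qed.

Lemma rat_rows_rcons (n r : nat) (cs : 'I_r -> 'cV[int]_n) (c : 'cV[int]_n) :
  rat_rows (fun i : 'I_(r + 1) => if split i is inl i' then cs i' else c) =
  col_mx (rat_rows cs) (map_mx intr c)^T.
Proof.
by apply/matrixP => a b; rewrite !mxE; case: (split a) => a'; rewrite !mxE ?fintype.ord1.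
Qed.

Lemma spanQ_max_rows (n : nat) (C : 'cV[int]_n -> Prop) :
  exists r (cs : 'I_r -> 'cV[int]_n), (forall i, C (cs i)) /\
    forall c, C c -> ((map_mx intr c)^T <= rat_rows cs)%MS.
Proof.
pose P k := `[< exists r (cs : 'I_r -> 'cV[int]_n),
                  (forall i, C (cs i)) /\ \rank (rat_rows cs) = k >].
have P0 : exists k, P k.
  exists 0%N; apply/asboolP; exists 0%N, (fun _ => 0); split=> [[]//|].
  by apply/eqP; rewrite -leqn0 rank_leq_row.
have Pn k : P k -> (k <= n)%N by move=> /asboolP [r [cs [_ <-]]]; apply: rank_leq_col.
case: (ex_maxnP P0 Pn) => k /asboolP [r [cs [Ccs rk]]] kmax.
exists r, cs; split=> // c Cc; apply: contraT => c_out.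
pose cs' (i : 'I_(r + 1)) := if split i is inl i' then cs i' else c.
have /kmax : P (\rank (rat_rows cs')).
  by apply/asboolP; exists (r + 1)%N, cs'; split=> // i; rewrite /cs'; case: split.
have M_sub : (rat_rows cs <= col_mx (rat_rows cs) (map_mx intr c)^T)%MS.
  by rewrite -addsmxE addsmxSl.
rewrite rat_rows_rcons -rk leqNgt (ltn_leqif (mxrank_leqif_sup M_sub)).
by rewrite col_mx_sub submx_refl c_out.
Qed.

Lemma spanQ_separate (n : nat) (C : 'cV[int]_n -> Prop) (w : 'cV[rat]_n) :
  ~ spanQ C w -> exists y : 'cV[rat]_n,
    (forall c, C c -> (map_mx intr c)^T *m y = 0) /\ w^T *m y != 0.
Proof.
move=> w_out; have [r [cs [Ccs C_sub]]] := spanQ_max_rows C; set M := rat_rows cs.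
have /rV0Pn [j wj] : w^T *m cokermx M != 0.
  rewrite -submxE; apply: contra_notN w_out => /submxP [x wx].
  exists [seq (x 0 i, cs i) | i <- index_enum 'I_r].
  split; first by move=> ? /mapP [i _ ->]; apply: Ccs.
  rewrite big_map -[w]trmxK wx mulmx_sum_row linear_sum; apply: eq_bigr => i _.
  by rewrite linearZ /= row_rat_rows trmxK.
exists (cokermx M *m delta_mx j 0); split=> [c /C_sub|].
  by rewrite submxE => /eqP c0; rewrite mulmxA c0 mul0mx.
by rewrite mulmxA -colE; apply/cV0Pn; exists 0; rewrite mxE.
Qed.

Lemma int_multiple (n : nat) (v : 'cV[rat]_n) :
  exists2 d : int, 0 < d & exists z : 'cV[int]_n, map_mx intr z = d%:~R *: v.
Proof.
exists (\prod_(i < n) denq (v i ord0)); first by apply: prodr_gt0 => i _; apply: denq_gt0.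
exists (\col_i (numq (v i ord0) * \prod_(k < n | k != i) denq (v k ord0))).
apply/matrixP => i j; rewrite fintype.ord1 !mxE [\prod_(k < n) _](bigD1 i) //= !intrM.
rewrite -{3}(divq_num_den (v i ord0)).
by field; rewrite intr_eq0 denq_neq0.
Qed.

Lemma int_normal_of_span_proper (m n : nat) (A : 'M[int]_(m, n))
    (C : 'cV[int]_n -> Prop) :
  span_proper_in_kerQ A C -> exists z : 'cV[int]_n,
    (forall c, C c -> z^T *m c = 0) /\ exists2 u, kerZ A u & z^T *m u != 0.
Proof.
move=> [_ [w [wA w_out]]]; have [y [yC wy]] := spanQ_separate w_out.
have [d d0 [z zy]] := int_multiple y; have [e e0 [u uw]] := int_multiple w.
have d_neq0 : d%:~R != 0 :> rat by rewrite intr_eq0 gt_eqF.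
have e_neq0 : e%:~R != 0 :> rat by rewrite intr_eq0 gt_eqF.
have map_zT (x : 'cV[int]_n) :
    map_mx intr (z^T *m x) = d%:~R *: ((map_mx intr x)^T *m y)^T.
  have -> : map_mx intr (z^T *m x) = (map_mx intr z)^T *m map_mx intr x :> 'M[rat]_1.
    by rewrite map_mxM map_trmx.
  by rewrite zy linearZ /= -scalemxAl trmx_mul trmxK.
exists z; split=> [c Cc|].
  by apply: map_intr_eq0; rewrite map_zT yC ?trmx0 ?scaler0.
exists u; first by apply/kerQ_intr; rewrite /kerQ uw -scalemxAr wA scaler0.
apply: contraNneq wy => zu0; have /eqP := map_zT u.
rewrite zu0 map_mx0 eq_sym scaler_eq0 (negbTE d_neq0) /= uw linearZ /= -scalemxAl.
by rewrite linearZ scaler_eq0 (negbTE e_neq0) /= trmx_eq0.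
Qed.

Lemma kerZ_col_mx (m n : nat) (A : 'M[int]_(m, n)) (z x : 'cV[int]_n) :
  kerZ (col_mx A z^T) x <-> kerZ A x /\ z^T *m x = 0.
Proof.
by rewrite /kerZ mul_col_mx -col_mx0; split=> [/eq_col_mx []|[-> ->]].
Qed.

Lemma kerZ_of_span_proper (m n : nat) (A : 'M[int]_(m, n)) (C : 'cV[int]_n -> Prop) :
  span_proper_in_kerQ A C -> forall c, C c -> kerZ A c.
Proof. by move=> [CA _] c /spanQ_mem /CA /kerQ_intr. Qed.

Lemma refined_configuration (K : fieldType) (m n : nat) (A : 'M[int]_(m, n))
    (C : 'cV[int]_n -> Prop) :
  pointed A -> span_proper_in_kerQ A C ->
  exists m' (A' : 'M[int]_(m', n)),
    [/\ pointed A', forall c, C c -> kerZ A' c, forall u, kerZ A' u -> kerZ A u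
      & ~ set_eq (toric_ideal K A') (toric_ideal K A)].
Proof.
move=> ptA spanC; have [z [zC [u uA zu]]] := int_normal_of_span_proper spanC.
exists (m + 1)%N, (col_mx A z^T); split.
- by move=> x /kerZ_col_mx [/ptA].
- by move=> c Cc; apply/kerZ_col_mx; split; [exact: kerZ_of_span_proper Cc|exact: zC].
- by move=> x /kerZ_col_mx [].
move=> eqI; have /eqI/toric_ideal_binom/kerZ_col_mx [_ zu0] := (toric_ideal_binom K A u).2 uA.
by rewrite zu0 eqxx in zu.
Qed.

(** * Radical splittings *)

Lemma set_eq_rad (K : fieldType) (n : nat) (S T : {mpoly K[n]} -> Prop) :
  set_eq S T -> set_eq (Defs.rad S) (Defs.rad T).
Proof. by move=> ST f; split; apply: rad_sub => p /ST; apply: ideal_gen_mem. Qed.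

Lemma kerZ_sub_of_toric_sub (K : fieldType) (m1 m2 n : nat)
    (A1 : 'M[int]_(m1, n)) (A2 : 'M[int]_(m2, n)) :
  (forall f, toric_ideal K A1 f -> toric_ideal K A2 f) -> forall u, kerZ A1 u -> kerZ A2 u.
Proof. by move=> sub12 u /(toric_ideal_binom K) /sub12 /toric_ideal_binom. Qed.

Lemma span_proper_of_toric_neq (K : fieldType) (m mi n : nat)
    (A : 'M[int]_(m, n)) (Ai : 'M[int]_(mi, n)) (C : 'cV[int]_n -> Prop) :
  (forall u, C u -> kerZ Ai u) -> (forall u, kerZ Ai u -> kerZ A u) ->
  ~ set_eq (toric_ideal K Ai) (toric_ideal K A) -> span_proper_in_kerQ A C.
Proof.
move=> CAi AiA neqI; split=> [v|]; first by apply: spanQ_kerQ => u /CAi /AiA.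
apply: contrapT => spanA; apply: neqI => f; split; first exact: toric_ideal_sub.
apply: toric_ideal_sub => u /kerQ_intr uA; apply/kerQ_intr/(spanQ_kerQ CAi).
by apply: contrapT => u_out; apply: spanA; exists (map_mx intr u).
Qed.

Definition rad_gen (K : fieldType) (m n : nat) (A : 'M[int]_(m, n))
    (L : seq 'cV[int]_n) : Prop :=
  set_eq (Defs.rad (binomials K (fun u => u \in L))) (toric_ideal K A).

Lemma min_size_rad_gen (K : fieldType) (m n : nat) (A : 'M[int]_(m, n))
    (L : seq 'cV[int]_n) :
  rad_gen K A L -> exists Ls, [/\ {subset Ls <= L}, rad_gen K A Ls &
    forall L', {subset L' <= Ls} -> rad_gen K A L' -> (size Ls <= size L')%N].
Proof.
move=> genL.
pose P k := `[< exists Ls, [/\ {subset Ls <= L}, rad_gen K A Ls & size Ls = k] >].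
have P0 : exists k, P k by exists (size L); apply/asboolP; exists L; split.
case: (ex_minnP P0) => k /asboolP [Ls [LsL genLs <-]] kmin.
exists Ls; split=> // L' L'Ls genL'; apply: kmin; apply/asboolP; exists L'.
by split=> // u /L'Ls /LsL.
Qed.

Lemma min_binom_gen_of_min_size (K : fieldType) (m n : nat) (A : 'M[int]_(m, n))
    (Ls : seq 'cV[int]_n) :
  rad_gen K A Ls ->
  (forall L', {subset L' <= Ls} -> rad_gen K A L' -> (size Ls <= size L')%N) ->
  min_binom_gen_up_to_rad A (binomials K (fun u => u \in Ls)).
Proof.
move=> genLs Lsmin; split=> [_ [u [_ ->]]|//|S' S'S]; first by exists (posm u), (negm u).
have [[_ [[u0 [u0Ls ->]] S'u0]]|] := pselect (exists f,
  binomials K (fun u => u \in Ls) f /\ ~ S' f); last by left.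
right=> genS'; pose keep u := `[< S' (binom K u) >].
have S'E : set_eq S' (binomials K (fun u => u \in filter keep Ls)).
  move=> f; split=> [S'f|[u [/[!mem_filter] /andP [/asboolP S'u _] ->]] //].
  have [u [uLs fu]] := S'S f S'f; exists u; split=> //.
  by rewrite mem_filter uLs andbT; apply/asboolP; rewrite -fu.
have sub_keep : {subset filter keep Ls <= Ls} by move=> u /[!mem_filter] /andP [].
have gen_keep : rad_gen K A (filter keep Ls).
  by move=> f; rewrite -(set_eq_rad S'E f); apply: genS'.
apply/negP: (Lsmin _ sub_keep gen_keep).
rewrite -ltnNge size_filter -[X in (_ < X)%N](count_predC keep) -addn1 leq_add2l -has_count.
by apply/hasP; exists u0 => //=; apply/asboolP.
Qed.

Definition split_min_binom_gen (K : fieldType) (m n : nat) (A : 'M[int]_(m, n))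
    (C C1 C2 : 'cV[int]_n -> Prop) : Prop :=
  [/\ forall u, C u -> kerZ A u, min_binom_gen_up_to_rad A (binomials K C),
      set_eq C (fun u => C1 u \/ C2 u), span_proper_in_kerQ A C1
    & span_proper_in_kerQ A C2].

Lemma split_min_binom_gen_of_radical_splittable (K : fieldType) (m n : nat)
    (A : 'M[int]_(m, n)) :
  radical_splittable K A -> exists C C1 C2, split_min_binom_gen K A C C1 C2.
Proof.
move=> [m1 [m2 [A1 [A2 [_ _ radA neq1 neq2]]]]].
have sub12 f : toric_ideal K A1 f \/ toric_ideal K A2 f -> toric_ideal K A f.
  by move=> f12; apply/radA; exists 1%N; rewrite expr1; apply: ideal_gen_mem.
have ker1 := kerZ_sub_of_toric_sub (fun f f1 => sub12 f (or_introl f1)).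
have ker2 := kerZ_sub_of_toric_sub (fun f f2 => sub12 f (or_intror f2)).
have [G1 [G1A1 gen1]] := toric_ideal_finite_gen K A1.
have [G2 [G2A2 gen2]] := toric_ideal_finite_gen K A2.
have G12A u : u \in G1 ++ G2 -> kerZ A u.
  by rewrite mem_cat => /orP [/G1A1/ker1|/G2A2/ker2].
have genG : rad_gen K A (G1 ++ G2).
  move=> f; split.
    by apply: toric_ideal_rad => _ [u [/G12A uA ->]]; apply/toric_ideal_binom.
  move=> /radA; apply: rad_sub => p [/gen1|/gen2]; apply: ideal_gen_sub => _ [u [uG ->]];
    by apply: ideal_gen_mem; exists u; rewrite mem_cat uG ?orbT.
have [Ls [LsG genLs Lsmin]] := min_size_rad_gen genG.
exists (fun u => u \in Ls), (fun u => u \in Ls /\ u \in G1), (fun u => u \in Ls /\ u \in G2).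
split=> [u /LsG /G12A //||u||].
- exact: min_binom_gen_of_min_size.
- split=> [uLs|[[]|[]] //]; have := LsG u uLs.
  by rewrite mem_cat => /orP [] uG; [left|right].
- by apply: span_proper_of_toric_neq neq1 => // u [_ /G1A1].
by apply: span_proper_of_toric_neq neq2 => // u [_ /G2A2].
Qed.

Lemma radical_splittable_of_split_min_binom_gen (K : fieldType) (m n : nat)
    (A : 'M[int]_(m, n)) (C C1 C2 : 'cV[int]_n -> Prop) :
  pointed A -> split_min_binom_gen K A C C1 C2 -> radical_splittable K A.
Proof.
move=> ptA [_ [_ radC _] C12 span1 span2].
have [m1 [A1 [pt1 C1A1 A1A neq1]]] := refined_configuration K ptA span1.
have [m2 [A2 [pt2 C2A2 A2A neq2]]] := refined_configuration K ptA span2.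
exists m1, m2, A1, A2; split=> // f; split=> [/radC|].
  apply: rad_sub => _ [u [Cu ->]]; apply: ideal_gen_mem.
  by case: ((C12 u).1 Cu) => [/C1A1|/C2A2] /(toric_ideal_binom K); [left|right].
by apply: toric_ideal_rad => p [/(toric_ideal_sub A1A)|/(toric_ideal_sub A2A)].
Qed.

Theorem corollary2p2 (K : fieldType) (m n : nat) (A : 'M[int]_(m, n)) :
  pointed A ->
  (radical_splittable K A <->
   exists C C1 C2 : 'cV[int]_n -> Prop,
     [/\ forall u, C u -> kerZ A u,
         min_binom_gen_up_to_rad A (fun f : {mpoly K[n]} => exists u, C u /\ f = binom K u),
         set_eq C (fun u => C1 u \/ C2 u),
         span_proper_in_kerQ A C1
       & span_proper_in_kerQ A C2]).
Proof.
move=> ptA; split; first exact: split_min_binom_gen_of_radical_splittable.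
by move=> [C [C1 [C2 splitC]]]; apply: radical_splittable_of_split_min_binom_gen ptA splitC.
Qed.
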